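(* Let $n,a,b,Z$ be positive integers with $\max\{a,b\}\le n\le a+b$, let $\Psi\in\mathbb{R}^{n\times n}$ be a positive semidefinite matrix, and let $K^{(3)}\in\mathbb{R}^{m_3\times n}$, $K^{(4)}\in\mathbb{R}^{m_4\times n}$. Then there exist integers $\tilde n,\tilde a,\tilde b$ with $\max\{\tilde a,\tilde b\}\le\tilde n\le\tilde a+\tilde b$, a positive semidefinite matrix $\tilde\Psi\in\mathbb{R}^{\tilde n\times\tilde n}$ with $\operatorname{rank}(\tilde\Psi)=\tilde n$, and matrices $\tilde K^{(3)}\in\mathbb{R}^{m_3\times\tilde n}$, $\tilde K^{(4)}\in\mathbb{R}^{m_4\times\tilde n}$, such that the problems $\mathrm{TaskAwareCoding}(n,\Psi,a,b,Z,K^{(3)},K^{(4)})$ and $\mathrm{TaskAwareCoding}(\tilde n,\tilde\Psi,\tilde a,\tilde b,Z,\tilde K^{(3)},\tilde K^{(4)})$ have equal optimal overall task losses, and an optimal coding scheme for either of the two problems can be transformed linearly (by multiplying its encoding and decoding matrices by fixed matrices) into an optimal coding scheme for the other.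
   Context: Problem $\mathrm{TaskAwareCoding}(n,\Psi,a,b,Z,K^{(3)},K^{(4)})$ (task-aware linear network coding over the butterfly network): let $x=(x_1,\dots,x_n)^\top$ be a real random vector with $\mathbb{E}[x]=0$ and covariance $\mathbb{E}[xx^\top]=\Psi$, and let $x^{(1)}=(x_1,\dots,x_a)^\top$, $x^{(2)}=(x_{n-b+1},\dots,x_n)^\top$. A coding scheme consists of matrices $E^{(1,3)},E^{(1,5)}\in\mathbb{R}^{Z\times a}$, $E^{(2,4)},E^{(2,5)}\in\mathbb{R}^{Z\times b}$, $E^{(5,6)}\in\mathbb{R}^{Z\times 2Z}$, $D^{(3)},D^{(4)}\in\mathbb{R}^{n\times 2Z}$. Set $\phi^{(1,3)}=E^{(1,3)}x^{(1)}$, $\phi^{(1,5)}=E^{(1,5)}x^{(1)}$, $\phi^{(2,4)}=E^{(2,4)}x^{(2)}$, $\phi^{(2,5)}=E^{(2,5)}x^{(2)}$, $\phi^{(5,6)}=E^{(5,6)}\begin{bmatrix}\phi^{(1,5)}\\ \phi^{(2,5)}\end{bmatrix}$, and reconstructions $\hat x^{(3)}=D^{(3)}\begin{bmatrix}\phi^{(1,3)}\\ \phi^{(5,6)}\end{bmatrix}$, $\hat x^{(4)}=D^{(4)}\begin{bmatrix}\phi^{(2,4)}\\ \phi^{(5,6)}\end{bmatrix}$. The overall task loss is $\mathcal{L}_{\text{total}}=\sum_{i\in\{3,4\}}\mathbb{E}\|K^{(i)}x-K^{(i)}\hat x^{(i)}\|_2^2$, which depends on the distribution of $x$ only through $\Psi$.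 The problem is to minimize $\mathcal{L}_{\text{total}}$ over all coding schemes; its optimal overall task loss is the minimum value, and an optimal coding scheme is a minimizer. *)

From HB Require Import structures.
From mathcomp Require Import all_boot all_order all_algebra.
From mathcomp Require Import classical_sets reals.
Set Implicit Arguments. Unset Strict Implicit. Unset Printing Implicit Defensive.
Import Order.TTheory GRing.Theory Num.Theory.
Local Open Scope ring_scope.
Local Open Scope classical_set_scope.

Definition psd (R : realType) (n : nat) (A : 'M[R]_n) : Prop :=
  A^T = A /\ forall v : 'cV[R]_n, 0 <= (v^T *m A *m v) 0 0.

Definition sel1 (R : realType) (a n : nat) : 'M[R]_(a, n) :=
  \matrix_(i < a, j < n) ((j : nat) == (i : nat))%:R.
Definition sel2 (R : realType) (b n : nat) : 'M[R]_(b, n) :=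
  \matrix_(i < b, j < n) ((j : nat) == (n - b + i)%N)%:R.

(* a coding scheme for the butterfly network *)
Record scheme (R : realType) (n a b Z : nat) := Scheme {
  E13 : 'M[R]_(Z, a); E15 : 'M[R]_(Z, a);
  E24 : 'M[R]_(Z, b); E25 : 'M[R]_(Z, b);
  E56 : 'M[R]_(Z, Z + Z);
  D3 : 'M[R]_(n, Z + Z); D4 : 'M[R]_(n, Z + Z) }.

Section Loss.
Variables (R : realType) (n a b Z m3 m4 : nat).
Variables (Psi : 'M[R]_n) (K3 : 'M[R]_(m3, n)) (K4 : 'M[R]_(m4, n)).

Definition map56 (s : scheme R n a b Z) : 'M[R]_(Z, n) :=
  E56 s *m col_mx (E15 s *m sel1 R a n) (E25 s *m sel2 R b n).
(* received vectors at nodes 3 and 4 as linear maps of x *)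
Definition map3 (s : scheme R n a b Z) : 'M[R]_(Z + Z, n) :=
  col_mx (E13 s *m sel1 R a n) (map56 s).
Definition map4 (s : scheme R n a b Z) : 'M[R]_(Z + Z, n) :=
  col_mx (E24 s *m sel2 R b n) (map56 s).

(* E||K x - K xhat||^2 = tr(A Psi A^T) with A = K (I - D M), since E[x x^T] = Psi *)
Definition task_err (m : nat) (K : 'M[R]_(m, n)) (A : 'M[R]_n) : R :=
  let B := K *m (1%:M - A) in \tr (B *m Psi *m B^T).

Definition total_loss (s : scheme R n a b Z) : R :=
  task_err K3 (D3 s *m map3 s) + task_err K4 (D4 s *m map4 s).

Definition opt_loss : R := inf [set total_loss s | s in [set: scheme R n a b Z]].

Definition is_optimal (s : scheme R n a b Z) : Prop :=
  forall s' : scheme R n a b Z, total_loss s <= total_loss s'.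
End Loss.

Definition transform (R : realType) (n a b n' a' b' Z : nat)
  (P1 : 'M[R]_(a, a')) (P2 : 'M[R]_(b, b')) (Q3 Q4 : 'M[R]_(n', n))
  (s : scheme R n a b Z) : scheme R n' a' b' Z :=
  Scheme (E13 s *m P1) (E15 s *m P1) (E24 s *m P2) (E25 s *m P2) (E56 s)
         (Q3 *m D3 s) (Q4 *m D4 s).

Definition linear_transfer (R : realType) (Z m3 m4 : nat)
  (n a b : nat) (Psi : 'M[R]_n) (K3 : 'M[R]_(m3, n)) (K4 : 'M[R]_(m4, n))
  (n' a' b' : nat) (Psi' : 'M[R]_n') (K3' : 'M[R]_(m3, n')) (K4' : 'M[R]_(m4, n')) : Prop :=
  exists (P1 : 'M[R]_(a, a')) (P2 : 'M[R]_(b, b')) (Q3 Q4 : 'M[R]_(n', n)),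
    forall s : scheme R n a b Z,
      is_optimal Psi K3 K4 s ->
      is_optimal Psi' K3' K4' (transform P1 P2 Q3 Q4 s).
Arguments linear_transfer {R} Z {m3 m4 n} a b Psi K3 K4 {n'} a' b' Psi' K3' K4'.
Arguments opt_loss {R n} a b Z {m3 m4} Psi K3 K4.

From HB Require Import structures.
From mathcomp Require Import all_boot all_order all_algebra.
From mathcomp Require Import classical_sets reals.
From mathcomp Require Import zify.
Import Order.TTheory GRing.Theory Num.Theory.
Local Open Scope ring_scope.

(* Only the row space of Psi matters: the loss tr (B Psi B^T) sees B only through
   B Psi.  The two sources observe the row spaces U1, U2 of sel1 Psi and sel2 Psi.
   Stacking bases of a complement of U1 :&: U2 in U1, of U1 :&: U2, and of a
   complement of U1 :&: U2 in U2 gives a row-free B with the row space U1 + U2 of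
   Psi, so Psi = T Psi' T^T with Psi' of full rank, and in the reduced problem the
   sources observe exactly the first two and the last two blocks of coordinates.
   Schemes of the reduced problem lift to the original one (decoders multiplied by
   T) with the same loss; schemes of the original one push down with no larger loss
   once the decoder output is projected orthogonally onto the column space of K T. *)

Set Implicit Arguments. Unset Strict Implicit. Unset Printing Implicit Defensive.

Section Gram.
Variable R : realFieldType.

Lemma mulmx_trmx_self_eq0 k (v : 'rV[R]_k) : ((v *m v^T) 0 0 == 0) = (v == 0).
Proof.
apply/idP/eqP => [|->]; last by rewrite mul0mx mxE.
rewrite mxE psumr_eq0 => [/allP v0|i _]; last by rewrite !mxE -expr2 sqr_ge0.
apply/rowP => i; have := v0 i (mem_index_enum _).
by rewrite !mxE -expr2 sqrf_eq0 => /eqP.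
Qed.

Lemma gram_unitmx r k (C : 'M[R]_(r, k)) : row_free C -> C *m C^T \in unitmx.
Proof.
move=> freeC; rewrite -row_free_unit; apply: inj_row_free => v vG0.
have /eqP vC0 : v *m C == 0.
  by rewrite -mulmx_trmx_self_eq0 trmx_mul !mulmxA -(mulmxA v) vG0 mul0mx mxE.
by apply: (row_free_inj freeC); rewrite vC0 mul0mx.
Qed.

Lemma gram_projK r m p (C : 'M[R]_(r, m)) (J : 'M[R]_(r, p)) :
  row_free C -> C^T *m invmx (C *m C^T) *m C *m (C^T *m J) = C^T *m J.
Proof.
move=> /gram_unitmx uG.
by rewrite !mulmxA -(mulmxA _ C) -(mulmxA C^T) mulVmx // mulmx1.
Qed.

End Gram.

(* A {1,3}-inverse: [X *m lsqinvmx X] is the orthogonal projector onto the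
   column space of [X], unlike [X *m pinvmx X]. *)
HB.lock Definition lsqinvmx (R : realFieldType) m k (X : 'M[R]_(m, k)) : 'M[R]_(k, m) :=
  let C := row_base X^T in (C *m pinvmx X^T)^T *m invmx (C *m C^T) *m C.

Section Lsqinvmx.
Variables (R : realFieldType) (m k : nat) (X : 'M[R]_(m, k)).

Lemma mulmx_lsqinvmx : X *m lsqinvmx X =
  (row_base X^T)^T *m invmx (row_base X^T *m (row_base X^T)^T) *m row_base X^T.
Proof.
have sCX : (row_base X^T <= X^T)%MS by rewrite eq_row_base.
have := congr1 trmx (mulmxKpV sCX); rewrite trmx_mul trmxK => XC.
by rewrite lsqinvmx.unlock !(mulmxA X) XC.
Qed.

Lemma lsqinvmx_sym : (X *m lsqinvmx X)^T = X *m lsqinvmx X.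
Proof.
rewrite mulmx_lsqinvmx; move: (row_base X^T) => C.
by rewrite !trmx_mul trmxK trmx_inv trmx_mul trmxK mulmxA.
Qed.

Lemma mulmx_lsqinvmxK : X *m lsqinvmx X *m X = X.
Proof.
have sXC : (X^T <= row_base X^T)%MS by rewrite eq_row_base.
have XE := congr1 trmx (mulmxKpV sXC); rewrite trmx_mul trmxK in XE.
by rewrite mulmx_lsqinvmx -[X in _ *m X = _]XE gram_projK ?row_base_free.
Qed.

End Lsqinvmx.

Section Psd.
Variable R : realType.

Lemma psd_mulmx_trmx m k (A : 'M[R]_(m, k)) (P : 'M[R]_k) :
  psd P -> psd (A *m P *m A^T).
Proof.
move=> [PT Pq]; split; first by rewrite !trmx_mul trmxK PT mulmxA.
by move=> v; have := Pq (A^T *m v); rewrite trmx_mul trmxK !mulmxA.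
Qed.

Lemma mxtrace_psd_ge0 m k (A : 'M[R]_(m, k)) (P : 'M[R]_k) :
  psd P -> 0 <= \tr (A *m P *m A^T).
Proof.
move=> /(psd_mulmx_trmx A) [_ Pq]; rewrite sumr_ge0 // => i _.
by have := Pq (delta_mx i 0); rewrite trmx_delta -rowE -colE !mxE.
Qed.

(* Pythagoras along [P] and [1 - P]: the cross terms vanish since [P] is an
   orthogonal projector. *)
Lemma mxtrace_proj_le m k (P : 'M[R]_m) (X Y : 'M[R]_(m, k)) (Psi : 'M[R]_k) :
  psd Psi -> P^T = P -> P *m P = P -> P *m X = X ->
  \tr ((X - P *m Y) *m Psi *m (X - P *m Y)^T) <= \tr ((X - Y) *m Psi *m (X - Y)^T).
Proof.
move=> psdPsi PT PP PX; have -> : X - P *m Y = P *m (X - Y) by rewrite mulmxBr PX.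
move: (X - Y) => E; set N := 1%:M - P.
have EE : E = P *m E + N *m E by rewrite -mulmxDl addrC subrK mul1mx.
have NT : N^T = N by rewrite /N linearB /= trmx1 PT.
have NP : N *m P = 0 by rewrite /N mulmxBl mul1mx PP subrr.
have PN : P *m N = 0 by rewrite /N mulmxBr mulmx1 PP subrr.
clearbody N.
have cross (A B : 'M[R]_m) : B^T = B -> B *m A = 0 ->
    \tr (A *m E *m Psi *m (B *m E)^T) = 0.
  by move=> BT BA0; rewrite trmx_mul BT !mulmxA mxtrace_mulC !mulmxA BA0 !mul0mx mxtrace0.
rewrite [in X in _ <= X]EE linearD /= !mulmxDl !mulmxDr !mxtraceD.
by rewrite (cross P N) // (cross N P) // addr0 add0r lerDl mxtrace_psd_ge0.
Qed.

End Psd.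

Local Open Scope classical_set_scope.

Lemma inf_image_le (R : realType) (T1 T2 : Type) (f : T1 -> R) (g : T2 -> R) :
  (forall x, 0 <= f x) -> T2 -> (forall y, exists x, f x <= g y) ->
  inf [set f x | x in [set: T1]] <= inf [set g y | y in [set: T2]].
Proof.
move=> f0 y0 fg; apply: lb_le_inf; first by exists (g y0), y0.
move=> _ [y _ <-]; have [x fxgy] := fg y; apply: le_trans fxgy.
by apply: ge_inf; [exists 0 => _ [z _ <-] | exists x].
Qed.

Local Close Scope classical_set_scope.

Lemma row_base_split (F : fieldType) n m1 m2 (U1 : 'M[F]_(m1, n)) (U2 : 'M[F]_(m2, n)) :
  exists p q r (X : 'M[F]_(p, n)) (Y : 'M[F]_(q, n)) (W : 'M[F]_(r, n)),
  [/\ (col_mx X Y :=: U1)%MS, (col_mx Y W :=: U2)%MS,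
      (col_mx (col_mx X Y) W :=: U1 + U2)%MS & row_free (col_mx (col_mx X Y) W)].
Proof.
set X := row_base (U1 :\: U2)%MS; set Y := row_base (U1 :&: U2)%MS.
set W := row_base (U2 :\: U1)%MS.
have XY : (col_mx X Y :=: U1)%MS.
  apply: eqmx_trans (eqmx_sym (addsmxE _ _)) _.
  apply: eqmx_trans (adds_eqmx (eq_row_base _) (eq_row_base _)) _.
  exact: addsmx_diff_cap_eq.
have YW : (col_mx Y W :=: U2)%MS.
  apply: eqmx_trans (eqmx_sym (addsmxE _ _)) _.
  apply: eqmx_trans (adds_eqmx (eq_row_base _) (eq_row_base _)) _.
  by rewrite addsmxC capmxC; apply: addsmx_diff_cap_eq.
have col_mxSu m1' m2' (A : 'M[F]_(m1', n)) (B : 'M[F]_(m2', n)) : (A <= col_mx A B)%MS.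
  by rewrite -addsmxE addsmxSl.
have col_mxSd m1' m2' (A : 'M[F]_(m1', n)) (B : 'M[F]_(m2', n)) : (B <= col_mx A B)%MS.
  by rewrite -addsmxE addsmxSr.
have XYW : (col_mx (col_mx X Y) W :=: U1 + U2)%MS.
  apply/eqmxP/andP; split.
    rewrite col_mx_sub XY addsmxSl /=.
    by rewrite (submx_trans (col_mxSd _ _ Y W)) // YW addsmxSr.
  rewrite addsmx_sub -{1}XY col_mxSu -YW col_mx_sub col_mxSd andbT.
  exact: submx_trans (col_mxSd _ _ X Y) (col_mxSu _ _ _ _).
exists _, _, _, X, Y, W; split=> //; rewrite /row_free XYW.
have := mxrank_sum_cap U1 U2; have := mxrank_cap_compl U1 U2.
by have := mxrank_cap_compl U2 U1; rewrite capmxC; lia.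
Qed.

Section Selection.
Variable R : realType.

Lemma sel_row_full a b n :
  (b <= n)%N -> (n <= a + b)%N -> row_full (col_mx (sel1 R a n) (sel2 R b n)).
Proof.
move=> le_bn le_nab; rewrite -sub1mx; apply/row_subP => i.
set S := col_mx _ _.
have [lt_ia | le_ai] := ltnP i a.
  have -> : row i 1%:M = row (lshift b (Ordinal lt_ia)) S.
    by rewrite rowKu; apply/rowP => j; rewrite !mxE eq_sym.
  exact: row_sub.
have le_nb_i : (n - b <= i)%N.
  by rewrite leq_subLR addnC (leq_trans le_nab) // leq_add2r.
have lt_ib : (i - (n - b) < b)%N by rewrite ltn_subLR // subnK.
have -> : row i 1%:M = row (rshift a (Ordinal lt_ib)) S.
  by rewrite rowKd; apply/rowP => j; rewrite !mxE /= subnKC // eq_sym.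
exact: row_sub.
Qed.

Lemma sel1_col_mx p q k (X : 'M[R]_(p, k)) (Y : 'M[R]_(q, k)) :
  sel1 R p (p + q) *m col_mx X Y = X.
Proof.
have -> : sel1 R p (p + q) = row_mx 1%:M 0.
  apply/matrixP => i j; rewrite !mxE; case: splitP => j' ->; rewrite !mxE.
    by rewrite eq_sym.
  by rewrite gtn_eqF // ltn_addr.
by rewrite mul_row_col mul1mx mul0mx addr0.
Qed.

Lemma sel2_col_mx3 p q r k (X : 'M[R]_(p, k)) (Y : 'M[R]_(q, k)) (W : 'M[R]_(r, k)) :
  sel2 R (q + r) (p + q + r) *m col_mx (col_mx X Y) W = col_mx Y W.
Proof.
have -> : sel2 R (q + r) (p + q + r) = block_mx (row_mx (0 : 'M_(q, p)) 1%:M) 0 0 1%:M.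
  apply/matrixP => i j; rewrite !mxE (_ : (p + q + r - (q + r) = p)%N); last by lia.
  case: (splitP i) => i' ->; rewrite !mxE; case: (splitP j) => j' ->; rewrite !mxE.
  - case: (splitP j') => j'' ->; rewrite !mxE; last by rewrite eqn_add2l eq_sym.
    by case: eqP => //; have := ltn_ord j''; lia.
  - by case: eqP => //; have := ltn_ord i'; lia.
  - by case: eqP => //; have := ltn_ord j'; lia.
  - by rewrite -addnA !eqn_add2l eq_sym.
by rewrite mul_block_col mul_row_col !mul0mx !mul1mx !add0r addr0.
Qed.

End Selection.

Lemma psd_row_free_factor (R : realType) n r (Psi : 'M[R]_n) (B : 'M[R]_(r, n)) :
  psd Psi -> row_free B -> (B :=: Psi)%MS ->
  exists (T : 'M[R]_(n, r)) (Psi' : 'M[R]_r),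
    [/\ T *m B = Psi, Psi = T *m Psi' *m T^T, psd Psi' & \rank Psi' = r].
Proof.
move=> psdPsi freeB eqB.
set T := Psi *m pinvmx B; set C := B *m pinvmx Psi.
have TB : T *m B = Psi by apply: mulmxKpV; rewrite eqB.
have CPsi : C *m Psi = B by apply: mulmxKpV; rewrite eqB.
clearbody T C.
have PsiE : Psi = T *m (C *m Psi *m C^T) *m T^T.
  have [PsiT _] := psdPsi.
  rewrite !mulmxA -(mulmxA T C Psi) CPsi TB -{2}PsiT -!trmx_mul.
  by rewrite CPsi TB PsiT.
exists T, (C *m Psi *m C^T); split=> //; first exact: psd_mulmx_trmx.
apply/eqP; rewrite eqn_leq rank_leq_row -{1}(eqP freeB) eqB {1}PsiE.
exact: leq_trans (mxrankM_maxl _ _) (mxrankM_maxr _ _).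
Qed.

Lemma map_transform (R : realType) n a b n' a' b' Z k
    (P1 : 'M[R]_(a, a')) (P2 : 'M[R]_(b, b')) (Q3 Q4 : 'M[R]_(n', n))
    (s : scheme R n a b Z) (T1 : 'M[R]_(n', k)) (T2 : 'M[R]_(n, k)) :
  P1 *m sel1 R a' n' *m T1 = sel1 R a n *m T2 ->
  P2 *m sel2 R b' n' *m T1 = sel2 R b n *m T2 ->
  map3 (transform P1 P2 Q3 Q4 s) *m T1 = map3 s *m T2 /\
  map4 (transform P1 P2 Q3 Q4 s) *m T1 = map4 s *m T2.
Proof.
move=> sel1E sel2E.
have e56 : map56 (transform P1 P2 Q3 Q4 s) *m T1 = map56 s *m T2.
  by rewrite /map56 /= -!mulmxA !mul_col_mx -!mulmxA (mulmxA P1) sel1E (mulmxA P2) sel2E.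
by rewrite /map3 /map4 !mul_col_mx e56 /= -!mulmxA (mulmxA P1) sel1E (mulmxA P2) sel2E.
Qed.

Lemma total_loss_ge0 (R : realType) n a b Z m3 m4 (Psi : 'M[R]_n)
    (K3 : 'M[R]_(m3, n)) (K4 : 'M[R]_(m4, n)) (s : scheme R n a b Z) :
  psd Psi -> 0 <= total_loss Psi K3 K4 s.
Proof. by move=> psdPsi; rewrite addr_ge0 // mxtrace_psd_ge0. Qed.

Section Reduction.
Variables (R : realType) (Z m3 m4 n a b n' a' b' : nat).
Variables (Psi : 'M[R]_n) (K3 : 'M[R]_(m3, n)) (K4 : 'M[R]_(m4, n)).
Variables (Psi' : 'M[R]_n') (T : 'M[R]_(n, n')).
Hypotheses (psdPsi' : psd Psi') (PsiE : Psi = T *m Psi' *m T^T).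

Lemma task_err_project_le m k (K : 'M[R]_(m, n)) (D : 'M[R]_(n, k)) (M : 'M[R]_(k, n)) :
  task_err Psi' (K *m T) (lsqinvmx (K *m T) *m K *m D *m (M *m T))
    <= task_err Psi K (D *m M).
Proof.
rewrite /task_err PsiE; set X := K *m T; set P := X *m lsqinvmx X.
have PX : P *m X = X by apply: mulmx_lsqinvmxK.
have PP : P *m P = P by rewrite {1}/P mulmxA PX.
have -> : X *m (1%:M - lsqinvmx X *m K *m D *m (M *m T)) =
          X - P *m (K *m D *m M *m T).
  by rewrite mulmxBr mulmx1 !mulmxA.
set E := K *m (1%:M - D *m M).
have -> : E *m (T *m Psi' *m T^T) *m E^T = (E *m T) *m Psi' *m (E *m T)^T.
  by rewrite (trmx_mul E T) !mulmxA.
have -> : E *m T = X - K *m D *m M *m T by rewrite /E mulmxBr mulmx1 mulmxBl !mulmxA.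
exact: mxtrace_proj_le psdPsi' (lsqinvmx_sym X) PP PX.
Qed.

Lemma task_err_lift m k (K : 'M[R]_(m, n)) (D : 'M[R]_(n', k)) (M : 'M[R]_(k, n)) :
  task_err Psi K (T *m D *m M) = task_err Psi' (K *m T) (D *m (M *m T)).
Proof.
rewrite /task_err PsiE; set E := K *m _.
have -> : E *m (T *m Psi' *m T^T) *m E^T = (E *m T) *m Psi' *m (E *m T)^T.
  by rewrite (trmx_mul E T) !mulmxA.
by rewrite /E !mulmxBr !mulmx1 mulmxBl !mulmxA.
Qed.

Variables (A1 : 'M[R]_(a, a')) (A2 : 'M[R]_(b, b')).
Variables (C1 : 'M[R]_(a', a)) (C2 : 'M[R]_(b', b)).
Hypotheses (A1E : A1 *m sel1 R a' n' = sel1 R a n *m T).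
Hypotheses (A2E : A2 *m sel2 R b' n' = sel2 R b n *m T).
Hypotheses (C1E : C1 *m (sel1 R a n *m T) = sel1 R a' n').
Hypotheses (C2E : C2 *m (sel2 R b n *m T) = sel2 R b' n').

Local Notation loss := (total_loss Psi K3 K4).
Local Notation loss' := (total_loss Psi' (K3 *m T) (K4 *m T)).

Definition reduce_scheme (s : scheme R n a b Z) : scheme R n' a' b' Z :=
  transform A1 A2 (lsqinvmx (K3 *m T) *m K3) (lsqinvmx (K4 *m T) *m K4) s.

Definition lift_scheme (s' : scheme R n' a' b' Z) : scheme R n a b Z :=
  transform C1 C2 T T s'.

Lemma loss_reduce_scheme_le s : loss' (reduce_scheme s) <= loss s.
Proof.
have [map3E map4E] :
    map3 (reduce_scheme s) = map3 s *m T /\ map4 (reduce_scheme s) = map4 s *m T.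
  by rewrite -[map3 _]mulmx1 -[map4 _]mulmx1; apply: map_transform; rewrite mulmx1.
by rewrite /total_loss map3E map4E lerD ?task_err_project_le.
Qed.

Lemma loss_lift_scheme s' : loss (lift_scheme s') = loss' s'.
Proof.
have [map3E map4E] :
    map3 (lift_scheme s') *m T = map3 s' /\ map4 (lift_scheme s') *m T = map4 s'.
  rewrite -[map3 s']mulmx1 -[map4 s']mulmx1.
  by apply: map_transform; rewrite mulmx1 -mulmxA.
by rewrite /total_loss !task_err_lift map3E map4E.
Qed.

Lemma opt_loss_reduce :
  opt_loss a b Z Psi K3 K4 = opt_loss a' b' Z Psi' (K3 *m T) (K4 *m T).
Proof.
have psdPsi : psd Psi by rewrite PsiE; apply: psd_mulmx_trmx.
apply/eqP; rewrite eq_le; apply/andP; split; apply: inf_image_le.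
- by move=> s; apply: total_loss_ge0.
- exact: Scheme 0 0 0 0 0 0 0.
- by move=> s'; exists (lift_scheme s'); rewrite loss_lift_scheme.
- by move=> s'; apply: total_loss_ge0.
- exact: Scheme 0 0 0 0 0 0 0.
- by move=> s; exists (reduce_scheme s); apply: loss_reduce_scheme_le.
Qed.

Lemma reduce_scheme_transfer :
  linear_transfer Z a b Psi K3 K4 a' b' Psi' (K3 *m T) (K4 *m T).
Proof.
exists A1, A2, (lsqinvmx (K3 *m T) *m K3), (lsqinvmx (K4 *m T) *m K4).
move=> s opt_s s'; apply: le_trans (loss_reduce_scheme_le s) _.
by rewrite -loss_lift_scheme; apply: opt_s.
Qed.

Lemma lift_scheme_transfer :
  linear_transfer Z a' b' Psi' (K3 *m T) (K4 *m T) a b Psi K3 K4.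
Proof.
exists C1, C2, T, T => s' opt_s' s; rewrite -/(lift_scheme s') loss_lift_scheme.
exact: le_trans (opt_s' (reduce_scheme s)) (loss_reduce_scheme_le s).
Qed.

End Reduction.

Lemma reduce_coding_problem (R : realType) Z m3 m4 n a b n' a' b' (Psi : 'M[R]_n)
    (K3 : 'M[R]_(m3, n)) (K4 : 'M[R]_(m4, n)) (Psi' : 'M[R]_n') (T : 'M[R]_(n, n')) :
  psd Psi' -> Psi = T *m Psi' *m T^T ->
  (sel1 R a' n' :=: sel1 R a n *m T)%MS -> (sel2 R b' n' :=: sel2 R b n *m T)%MS ->
  [/\ opt_loss a b Z Psi K3 K4 = opt_loss a' b' Z Psi' (K3 *m T) (K4 *m T),
      linear_transfer Z a b Psi K3 K4 a' b' Psi' (K3 *m T) (K4 *m T)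
    & linear_transfer Z a' b' Psi' (K3 *m T) (K4 *m T) a b Psi K3 K4].
Proof.
move=> psdPsi' PsiE sel1T sel2T.
have /submxP[A1 /esym A1E] : (sel1 R a n *m T <= sel1 R a' n')%MS by rewrite sel1T.
have /submxP[A2 /esym A2E] : (sel2 R b n *m T <= sel2 R b' n')%MS by rewrite sel2T.
have /submxP[C1 /esym C1E] : (sel1 R a' n' <= sel1 R a n *m T)%MS by rewrite sel1T.
have /submxP[C2 /esym C2E] : (sel2 R b' n' <= sel2 R b n *m T)%MS by rewrite sel2T.
split.
- apply: (opt_loss_reduce Z K3 K4 psdPsi' PsiE A1E A2E C1E C2E).
- apply: (reduce_scheme_transfer Z K3 K4 psdPsi' PsiE A1E A2E C1E C2E).
- apply: (lift_scheme_transfer Z K3 K4 psdPsi' PsiE A1E A2E C1E C2E).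
Qed.

Unset Implicit Arguments. Set Strict Implicit.

Theorem theorem1 (R : realType) (n a b Z m3 m4 : nat) (Psi : 'M[R]_n)
  (K3 : 'M[R]_(m3, n)) (K4 : 'M[R]_(m4, n)) :
  (0 < n)%N -> (0 < a)%N -> (0 < b)%N -> (0 < Z)%N ->
  (maxn a b <= n)%N -> (n <= a + b)%N -> psd Psi ->
  exists (nt na_t nb_t : nat) (Psit : 'M[R]_nt)
         (K3t : 'M[R]_(m3, nt)) (K4t : 'M[R]_(m4, nt)),
    [/\ (maxn na_t nb_t <= nt)%N /\ (nt <= na_t + nb_t)%N,
        psd Psit /\ \rank Psit = nt,
        opt_loss a b Z Psi K3 K4 = opt_loss na_t nb_t Z Psit K3t K4t,
        linear_transfer Z a b Psi K3 K4 na_t nb_t Psit K3t K4t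
      & linear_transfer Z na_t nb_t Psit K3t K4t a b Psi K3 K4].
Proof.
move=> _ _ _ _ le_max le_nab psdPsi.
have le_bn : (b <= n)%N by move: le_max; rewrite geq_max => /andP[].
have [p [q [r [X [Y [W [XY YW XYW freeB]]]]]]] :=
  row_base_split (sel1 R a n *m Psi) (sel2 R b n *m Psi).
have BPsi : (col_mx (col_mx X Y) W :=: Psi)%MS.
  apply: eqmx_trans XYW _; apply: eqmx_trans (addsmxE _ _) _.
  by rewrite -mul_col_mx; apply/eqmxMfull/sel_row_full.
have [T [Psi' [TB PsiE psdPsi' rankPsi']]] := psd_row_free_factor psdPsi freeB BPsi.
have sel1T : (sel1 R (p + q) (p + q + r) :=: sel1 R a n *m T)%MS.
  by apply: (eqmxMfree freeB); rewrite sel1_col_mx -mulmxA TB.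
have sel2T : (sel2 R (q + r) (p + q + r) :=: sel2 R b n *m T)%MS.
  by apply: (eqmxMfree freeB); rewrite sel2_col_mx3 -mulmxA TB.
have [opt_eq reduceT liftT] := reduce_coding_problem Z K3 K4 psdPsi' PsiE sel1T sel2T.
exists (p + q + r)%N, (p + q)%N, (q + r)%N, Psi', (K3 *m T), (K4 *m T).
split=> //; split.
- by rewrite geq_max leq_addr -addnA leq_addl.
- by rewrite leq_add2l leq_addl.
Qed.
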